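(* Let $G$ be a digraph and let $\alpha^{(n+1)}>\gamma^{(n)}>\beta^{(n-1)}$ be allowed elementary paths on $G$ (of lengths $n+1,n,n-1$). Write $\alpha=v_0v_1\cdots v_{n+1}$. Then either (a) there exists an allowed elementary $n$-path $\gamma'\neq\gamma$ with $\alpha>\gamma'>\beta$; or (b) $\beta$ is obtained from $\alpha$ by removing two subsequent vertices $v_i\to v_{i+1}$ for some $0\le i\le n$.
   Context: A digraph $G=(V,E)$ consists of a set $V$ and $E\subseteq(V\times V)\setminus\{(v,v)\}$; $(u,v)\in E$ is written $u\to v$. An allowed elementary $n$-path is a sequence $v_0\cdots v_n$ of vertices with $v_{i-1}\to v_i\in E$ for $1\le i\le n$. For allowed elementary paths, $\gamma'<\gamma$ (equivalently $\gamma>\gamma'$) means $\gamma'$ is obtained from $\gamma$ by deleting some of its entries. *)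

From mathcomp Require Import all_boot.
Set Implicit Arguments. Unset Strict Implicit. Unset Printing Implicit Defensive.

Definition digraph (V : Type) (E : V -> V -> Prop) : Prop :=
  forall v, ~ E v v.

Fixpoint allowed (V : Type) (E : V -> V -> Prop) (s : seq V) : Prop :=
  match s with
  | x :: ((y :: _) as t) => E x y /\ allowed E t
  | _ => True
  end.

Definition allowed_path (V : Type) (E : V -> V -> Prop) (n : nat) (s : seq V) : Prop :=
  size s = n.+1 /\ allowed E s.

Definition path_lt (V : Type) (g' g : seq V) : Prop :=
  exists m : bitseq, size m = size g /\ g' = mask m g /\ size g' < size g.

From mathcomp Require Import all_boot zify.
Set Implicit Arguments.
Unset Strict Implicit.
Unset Printing Implicit Defensive.

(* Deleting one entry of [alpha] gives [gamma] and deleting one more gives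
   [beta], so [alpha = A u B w C] and [beta = A B C] with [gamma] one of the two
   intermediate paths [A B w C] and [A u B C].  If [B] is empty, [u w] are two
   consecutive vertices of [alpha]: this is alternative (b).  Otherwise both
   intermediate paths are allowed, since each of their edges is an edge of
   [alpha] or of [beta]; they differ in the entry after [A], where one has [u]
   and the other the first vertex [b] of [B], and [u <> b] because [u -> b] is an
   edge and [E] has no loops.  The intermediate path other than [gamma] is the
   [gamma'] of alternative (a). *)

Section DeleteEntries.
Variable V : Type.
Implicit Types (s t a b c d : seq V) (m : bitseq).

Lemma mask_eq_id m s : size m = size s -> size (mask m s) = size s -> mask m s = s.
Proof.
elim: s m => [|z s IH] [|[] m] //= [size_m] size_mask_m.
- by rewrite IH //; case: size_mask_m.
- by move: (count_size id m); rewrite -(size_mask size_m) size_mask_m size_m ltnn.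
Qed.

Lemma mask_delete_one m s : size m = size s -> (size (mask m s)).+1 = size s ->
  exists a x b, s = a ++ x :: b /\ mask m s = a ++ b.
Proof.
elim: s m => [|z s IH] [|[] m] //= [size_m] [size_mask_m].
- have [a [x [b [-> ->]]]] := IH m size_m size_mask_m.
  by exists (z :: a), x, b.
- by exists [::], z, s; rewrite mask_eq_id.
Qed.

Lemma path_lt_delete_one s t : path_lt s t -> size t = (size s).+1 ->
  exists a x b, t = a ++ x :: b /\ s = a ++ b.
Proof. by move=> [m [size_m [-> _]]] size_t; apply: mask_delete_one. Qed.

Lemma path_lt_cat_cons s x t : path_lt (s ++ t) (s ++ x :: t).
Proof.
exists (nseq (size s) true ++ false :: nseq (size t) true); split; last split.
- by rewrite !size_cat /= !size_nseq.
- by rewrite mask_cat ?size_nseq //= !mask_true.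
- by rewrite !size_cat /= addnS.
Qed.

Lemma cat_eq_cat_cons a b c d y : a ++ b = c ++ y :: d ->
  (exists a2, a = c ++ y :: a2 /\ d = a2 ++ b) \/
  (exists c2, c = a ++ c2 /\ b = c2 ++ y :: d).
Proof.
elim: a c => [|z a IH] c /=; first by right; exists c.
case: c => [|w c] /= [-> eq_ab]; first by left; exists a; rewrite eq_ab.
case: (IH c eq_ab) => [[a2 [-> ->]]|[c2 [-> ->]]].
- by left; exists a2.
- by right; exists c2.
Qed.

Lemma path_lt_delete_two s t r :
  path_lt s t -> path_lt r s -> size t = (size s).+1 -> size s = (size r).+1 ->
  exists A u B w C, t = A ++ u :: B ++ w :: C /\ r = A ++ B ++ C /\
    (s = A ++ B ++ w :: C \/ s = A ++ u :: B ++ C).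
Proof.
move=> lt_st lt_rs size_t size_s.
have [a [x [b [-> s_ab]]]] := path_lt_delete_one lt_st size_t; subst s.
have [c [y [d [ab_eq ->]]]] := path_lt_delete_one lt_rs size_s.
case: (cat_eq_cat_cons ab_eq) => [[B [-> ->]]|[B [-> ->]]].
- by exists c, y, B, x, b; rewrite -!catA; do 2!split=> //; right.
- by exists a, x, B, y, d; rewrite -!catA; do 2!split=> //; left.
Qed.

Lemma cat_take_drop_skip2 (A C : seq V) u w :
  take (size A) (A ++ u :: w :: C) ++ drop (size A).+2 (A ++ u :: w :: C) = A ++ C.
Proof. by rewrite take_size_cat // -add2n -drop_drop drop_size_cat // !drop_cons drop0. Qed.

End DeleteEntries.

Section AllowedPaths.
Variables (V : Type) (E : V -> V -> Prop).
Implicit Types (s t A B C : seq V).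

Lemma allowed_cat_cons s x t :
  allowed E (s ++ x :: t) <-> allowed E (rcons s x) /\ allowed E (x :: t).
Proof.
elim: s => [|y s IH] /=; first by split=> [|[]].
by case: s IH => [|z s] IH /=; tauto.
Qed.

Lemma allowed_delete_swap A u b B w C :
  allowed E (A ++ u :: b :: B ++ w :: C) -> allowed E (A ++ b :: B ++ C) ->
  allowed E (A ++ b :: B ++ w :: C) /\ allowed E (A ++ u :: b :: B ++ C).
Proof.
move=> /allowed_cat_cons [allowed_Au [E_ub allowed_bBwC]].
move=> /allowed_cat_cons [allowed_Ab allowed_bBC].
by split; apply/allowed_cat_cons.
Qed.

Lemma other_intermediate_path n A u b B w C gamma :
  digraph E -> allowed_path E n.+1 (A ++ u :: b :: B ++ w :: C) ->
  allowed E (A ++ b :: B ++ C) ->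
  gamma = A ++ b :: B ++ w :: C \/ gamma = A ++ u :: b :: B ++ C ->
  exists gamma', allowed_path E n gamma' /\ gamma' <> gamma /\
    path_lt gamma' (A ++ u :: b :: B ++ w :: C) /\ path_lt (A ++ b :: B ++ C) gamma'.
Proof.
move=> loopless [size_alpha allowed_alpha] allowed_beta gammaE.
have [allowed_g1 allowed_g2] := allowed_delete_swap allowed_alpha allowed_beta.
have E_ub : E u b by case/allowed_cat_cons: allowed_alpha => _ [].
have g1_neq_g2 : A ++ b :: B ++ w :: C <> A ++ u :: b :: B ++ C.
  move=> /(congr1 (drop (size A))); rewrite !drop_size_cat // => -[b_eq_u _].
  by apply: (loopless u); rewrite -{2}b_eq_u.
have size_g1 : size (A ++ b :: B ++ w :: C) = n.+1.
  by move: size_alpha; rewrite !size_cat /= size_cat /=; lia.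
have size_g2 : size (A ++ u :: b :: B ++ C) = n.+1.
  by move: size_alpha; rewrite !size_cat /= !size_cat /=; lia.
have g1_lt_alpha := path_lt_cat_cons A u (b :: B ++ w :: C).
have beta_lt_g2 := path_lt_cat_cons A u (b :: B ++ C).
have g2_lt_alpha : path_lt (A ++ u :: b :: B ++ C) (A ++ u :: b :: B ++ w :: C).
  by have := path_lt_cat_cons (A ++ u :: b :: B) w C; rewrite -!catA.
have beta_lt_g1 : path_lt (A ++ b :: B ++ C) (A ++ b :: B ++ w :: C).
  by have := path_lt_cat_cons (A ++ b :: B) w C; rewrite -!catA.
case: gammaE => ->.
- by exists (A ++ u :: b :: B ++ C); split=> //; split=> [/esym|].
- by exists (A ++ b :: B ++ w :: C); do !split.
Qed.

End AllowedPaths.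

Theorem proposition2p3 (V : Type) (E : V -> V -> Prop) (n : nat)
  (alpha gamma beta : seq V) :
  digraph E -> 1 <= n ->
  allowed_path E n.+1 alpha -> allowed_path E n gamma -> allowed_path E n.-1 beta ->
  path_lt gamma alpha -> path_lt beta gamma ->
  (exists gamma' : seq V,
      allowed_path E n gamma' /\ gamma' <> gamma /\
      path_lt gamma' alpha /\ path_lt beta gamma')
  \/
  (exists i : nat, i <= n /\ beta = take i alpha ++ drop i.+2 alpha).
Proof.
move=> loopless n_gt0 alpha_path [size_gamma _] [size_beta allowed_beta] lt_ga lt_bg.
rewrite prednK // in size_beta.
have size_alpha : size alpha = (size gamma).+1 by rewrite size_gamma; case: alpha_path.
have size_gamma_beta : size gamma = (size beta).+1 by rewrite size_gamma size_beta.
have [A [u [B [w [C [alphaE [betaE gammaE]]]]]]] :=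
  path_lt_delete_two lt_ga lt_bg size_alpha size_gamma_beta.
clear lt_ga lt_bg size_alpha size_gamma_beta; subst alpha beta.
case: B => [|b B] in alpha_path allowed_beta size_beta gammaE *.
- right; exists (size A); rewrite cat_take_drop_skip2; split=> //.
  by rewrite -size_beta size_cat leq_addr.
- by left; apply: other_intermediate_path.
Qed.
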